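(* Let $\sigma$ be a signature and $\varphi$ a $\mathcal{CO}_{\sqcup}[\sigma]$- or $\mathcal{COD}[\sigma]$-formula. (i) For any causal team $T$ over $\sigma$: $T\models^c\varphi$ iff $T^g\models^g\varphi$. (ii) For any generalized causal team $T$ over $\sigma$ in which all elements have the same function component: $T\models^g\varphi$ iff $T^c\models^c\varphi$.
   Context: A signature $\sigma=(\mathrm{Dom},\mathrm{Ran})$: $\mathrm{Dom}$ nonempty finite set of variables, each with nonempty finite range $\mathrm{Ran}(X)$; $\mathbf X=\mathbf x$ abbreviates $X_1=x_1\wedge\dots\wedge X_n=x_n$ ($\mathbf x\in\prod\mathrm{Ran}(X_i)$), inconsistent if it contains $X=x,X=x'$ with $x\ne x'$. Languages: $\mathcal{CO}[\sigma]$: $\alpha::=X=x\mid\neg\alpha\mid\alpha\wedge\alpha\mid\alpha\vee\alpha\mid\mathbf X=\mathbf x\;\Box\!\!\rightarrow\alpha$; $\mathcal{CO}_{\sqcup}[\sigma]$: $\varphi::=X=x\mid\neg\alpha\mid\varphi\wedge\varphi\mid\varphi\vee\varphi\mid\varphi\sqcup\varphi\mid\mathbf X=\mathbf x\;\Box\!\!\rightarrow\varphi$; $\mathcal{COD}[\sigma]$: $\varphi::=X=x\mid{=}(\mathbf X;Y)\mid\neg\alpha\mid\varphi\wedge\varphi\mid\varphi\vee\varphi\mid\mathbf X=\mathbf x\;\Box\!\!\rightarrow\varphi$ ($\alpha\in\mathcal{CO}[\sigma]$). Systems of functions $\mathcal F$: for each $V\in\mathrm{En}(\mathcal F)\subseteq\mathrm{Dom}$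 parents $PA^{\mathcal F}_V\subseteq\mathrm{Dom}\setminus\{V\}$ and $\mathcal F_V:\mathrm{Ran}(PA^{\mathcal F}_V)\to\mathrm{Ran}(V)$; $\mathrm{Ex}(\mathcal F)=\mathrm{Dom}\setminus\mathrm{En}(\mathcal F)$; only recursive (acyclic parent graph). An assignment $s$ is compatible with $\mathcal F$ if $s(V)=\mathcal F_V(s(PA^{\mathcal F}_V))$ for $V\in\mathrm{En}(\mathcal F)$. For consistent $\mathbf X=\mathbf x$: $\mathcal F_{\mathbf X=\mathbf x}$ restricts $\mathcal F$ to $\mathrm{En}(\mathcal F)\setminus\mathbf X$; $s^{\mathcal F}_{\mathbf X=\mathbf x}$: $X_i\mapsto x_i$, $V\mapsto s(V)$ on $\mathrm{Ex}(\mathcal F)\setminus\mathbf X$, $V\mapsto\mathcal F_V(s^{\mathcal F}_{\mathbf X=\mathbf x}(PA^{\mathcal F}_V))$ on $\mathrm{En}(\mathcal F)\setminus\mathbf X$. Causal team $T=(T^-,\mathcal F)$ ($T^-$ a set of compatible assignments; all teams with empty team component identified as $\emptyset$); causal subteams $(S^-,\mathcal F)$, $S^-\subseteq T^-$; $T_{\mathbf X=\mathbf x}=(\{s^{\mathcal F}_{\mathbf X=\mathbf x}:s\in T^-\},\mathcal F_{\mathbf X=\mathbf x})$. $\models^c$: $T\models X=x$ iff $s(X)=x$ for all $s\in T^-$; $T\models{=}(\mathbf X;Y)$ iff for all $s,s'\in T^-$, $s(\mathbf X)=s'(\mathbf X)$ implies $s(Y)=s'(Y)$; $T\models\neg\alpha$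 iff $(\{s\},\mathcal F)\not\models\alpha$ for all $s\in T^-$; $\wedge$ classical; $T\models\varphi\vee\psi$ iff causal subteams $T_1,T_2$ exist with $T_1^-\cup T_2^-=T^-$, $T_1\models\varphi$, $T_2\models\psi$; $T\models\varphi\sqcup\psi$ iff $T\models\varphi$ or $T\models\psi$; $T\models\mathbf X=\mathbf x\;\Box\!\!\rightarrow\varphi$ iff $\mathbf X=\mathbf x$ inconsistent or $T_{\mathbf X=\mathbf x}\models\varphi$. Generalized causal team: a set $T$ of compatible pairs $(s,\mathcal F)$ with $\mathcal F$ recursive; $T^-=\{s:(s,\mathcal F)\in T\}$; $T_{\mathbf X=\mathbf x}=\{(s^{\mathcal F}_{\mathbf X=\mathbf x},\mathcal F_{\mathbf X=\mathbf x}):(s,\mathcal F)\in T\}$; $\models^g$: same clauses except $T\models\neg\alpha$ iff $\{(s,\mathcal F)\}\not\models\alpha$ for all $(s,\mathcal F)\in T$, and $T\models\varphi\vee\psi$ iff $T=T_1\cup T_2$ with $T_1\models\varphi$, $T_2\models\psi$. For a causal team $T=(T^-,\mathcal F)$, $T^g=\{(s,\mathcal F):s\in T^-\}$. For a nonempty generalized causal team $T=\{(s,\mathcal F):s\in T^-\}$ with a single function component $\mathcal F$, $T^c=(T^-,\mathcal F)$; and $\emptyset^c=\emptyset$. *)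

From Stdlib Require Import Relation_Operators.
From mathcomp Require Import all_boot.



Set Implicit Arguments.
Unset Strict Implicit.
Unset Printing Implicit Defensive.

Section Causal.

(* Signature: Dom = the finite type V, Ran X = the finite type Ran X.
   Nonemptiness of Dom and of each range is assumed in the theorem. *)
Variable V : finType.
Variable Ran : V -> finType.

Definition assignment := forall v : V, Ran v.

(* A system of functions: for each V, None if V is exogenous, or
   Some (PA_V, F_V) if V is endogenous.  F_V is represented as a function on
   full assignments which (by the validity condition) only depends on the
   values of the parents; this is in bijection with Ran(PA_V) -> Ran(V). *)
Definition system := forall v : V, option ({set V} * (assignment -> Ran v)).

Definition endo (F : system) (v : V) : Prop := F v <> None.

Definition parent_edge (F : system) (w v : V) : Prop :=
  match F v with Some (P, _) => w \in P | None => False end.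

Definition recursive_system (F : system) : Prop :=
  (forall v P f, F v = Some (P, f) ->
     v \notin P /\
     (forall s t : assignment, (forall w, w \in P -> s w = t w) -> f s = f t))
  /\ (forall v, ~ clos_trans V (parent_edge F) v v).

Definition compatible (s : assignment) (F : system) : Prop :=
  forall v P f, F v = Some (P, f) -> s v = f s.

Definition intervention := seq {X : V & Ran X}.

Definition consistent (I : intervention) : Prop :=
  forall p q, p \in I -> q \in I -> tag p = tag q -> p = q.

Fixpoint lookup (I : intervention) (v : V) : option (Ran v) :=
  match I with
  | [::] => None
  | p :: I' =>
      match tag p =P v with
      | ReflectT e => Some (eq_rect _ Ran (tagged p) _ e)
      | ReflectF _ => lookup I' v
      end
  end.

(* F_{X=x}: restriction of F to En(F) \ X *)
Definition intervene_sys (F : system) (I : intervention) : system :=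
  fun v => match lookup I v with Some _ => None | None => F v end.

Definition int_step (F : system) (I : intervention) (s t : assignment)
  : assignment :=
  fun v => match lookup I v with
           | Some x => x
           | None => match F v with
                     | Some (_, f) => f t
                     | None => s v
                     end
           end.

(* s^F_{X=x}: since F is recursive, iterating #|V| times reaches the unique
   assignment defined by the recursive clauses. *)
Definition int_assign (F : system) (I : intervention) (s : assignment)
  : assignment := iter #|V| (int_step F I s) s.

Inductive form : Type :=
| Eq (X : V) (x : Ran X)
| Dep (Xs : seq V) (Y : V)
| Neg (a : form)
| And (a b : form)
| Or (a b : form)
| Tor (a b : form)
| Cf (I : intervention) (a : form).

Fixpoint isCO (f : form) : bool :=
  match f with
  | Eq _ _ => true
  | Dep _ _ => false
  | Neg a => isCO a
  | And a b | Or a b => isCO a && isCO b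
  | Tor _ _ => false
  | Cf _ a => isCO a
  end.

Fixpoint isCOsq (f : form) : bool :=
  match f with
  | Eq _ _ => true
  | Dep _ _ => false
  | Neg a => isCO a
  | And a b | Or a b | Tor a b => isCOsq a && isCOsq b
  | Cf _ a => isCOsq a
  end.

Fixpoint isCOD (f : form) : bool :=
  match f with
  | Eq _ _ => true
  | Dep _ _ => true
  | Neg a => isCO a
  | And a b | Or a b => isCOD a && isCOD b
  | Tor _ _ => false
  | Cf _ a => isCOD a
  end.

Record causal_team := CTeam { ct_set : assignment -> Prop; ct_sys : system }.

Definition is_causal_team (T : causal_team) : Prop :=
  recursive_system (ct_sys T) /\
  forall s, ct_set T s -> compatible s (ct_sys T).

Definition ct_int (T : causal_team) (I : intervention) : causal_team :=
  CTeam (fun t => exists s, ct_set T s /\ t = int_assign (ct_sys T) I s)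
        (intervene_sys (ct_sys T) I).

Fixpoint satc (T : causal_team) (phi : form) : Prop :=
  match phi with
  | Eq X x => forall s, ct_set T s -> s X = x
  | Dep Xs Y => forall s s', ct_set T s -> ct_set T s' ->
                  (forall X, X \in Xs -> s X = s' X) -> s Y = s' Y
  | Neg a => forall s, ct_set T s ->
               ~ satc (CTeam (fun t => t = s) (ct_sys T)) a
  | And a b => satc T a /\ satc T b
  | Or a b => exists T1 T2 : assignment -> Prop,
                (forall s, ct_set T s <-> T1 s \/ T2 s) /\
                satc (CTeam T1 (ct_sys T)) a /\ satc (CTeam T2 (ct_sys T)) b
  | Tor a b => satc T a \/ satc T b
  | Cf J a => ~ consistent J \/ satc (ct_int T J) a
  end.

Definition gteam := assignment * system -> Prop.

Definition is_gteam (T : gteam) : Prop :=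
  forall p, T p -> recursive_system p.2 /\ compatible p.1 p.2.

Definition gt_int (T : gteam) (I : intervention) : gteam :=
  fun q => exists p, T p /\
    q = (int_assign p.2 I p.1, intervene_sys p.2 I).

Fixpoint satg (T : gteam) (phi : form) : Prop :=
  match phi with
  | Eq X x => forall p, T p -> p.1 X = x
  | Dep Xs Y => forall p p', T p -> T p' ->
                  (forall X, X \in Xs -> p.1 X = p'.1 X) -> p.1 Y = p'.1 Y
  | Neg a => forall p, T p -> ~ satg (fun q => q = p) a
  | And a b => satg T a /\ satg T b
  | Or a b => exists T1 T2 : gteam,
                (forall p, T p <-> T1 p \/ T2 p) /\ satg T1 a /\ satg T2 b
  | Tor a b => satg T a \/ satg T b
  | Cf J a => ~ consistent J \/ satg (gt_int T J) a
  end.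

Definition to_g (T : causal_team) : gteam :=
  fun p => ct_set T p.1 /\ p.2 = ct_sys T.

(* T^c for a generalized team all of whose elements have function
   component F (for T empty, (emptyset, F) is the empty causal team). *)
Definition to_c (T : gteam) (F : system) : causal_team :=
  CTeam (fun s => exists G, T (s, G)) F.

End Causal.

(* The translation T |-> T^g commutes with every operation the semantics uses:
   it maps intervened teams to intervened teams and singleton teams to
   singletons, and the covers of T^g by two subteams are exactly the images of
   the covers of T, because every subteam of T^g still has the single function
   component of T and so is (S, F)^g for its set S of assignments.  Induction
   on formulas therefore gives (i) for every formula, with no use of the
   fragment, of recursiveness or of nonemptiness, and (ii) follows since a
   generalized team whose function components all equal F is (T^c)^g. *)

From mathcomp Require Import all_boot.
From Stdlib Require Import FunctionalExtensionality PropExtensionality.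

Set Implicit Arguments.
Unset Strict Implicit.
Unset Printing Implicit Defensive.

Lemma pred_ext (A : Type) (P Q : A -> Prop) : (forall a, P a <-> Q a) -> P = Q.
Proof.
by move=> PQ; apply: functional_extensionality => a; apply: propositional_extensionality.
Qed.

Section CausalToGeneralized.

Variables (V : finType) (Ran : V -> finType).

Local Notation causal_team := (causal_team Ran).
Local Notation gteam := (gteam Ran).

Lemma to_g_singleton (s : assignment Ran) (F : system Ran) :
  to_g (CTeam (fun t => t = s) F) = (fun q => q = (s, F)).
Proof. by apply: pred_ext => -[t G]; split=> [[/= -> ->] | [-> ->]]. Qed.

Lemma to_g_int (T : causal_team) (J : intervention Ran) :
  to_g (ct_int T J) = gt_int (to_g T) J.
Proof.
apply: pred_ext => -[t G]; split.
- by case=> -[s [Ts /= ->]] /= ->; exists (s, ct_sys T).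
- by case=> -[s G'] [[/= Ts ->] [-> ->]]; split=> //; exists s.
Qed.

Lemma to_gK (T : gteam) (F : system Ran) :
  (forall p, T p -> p.2 = F) -> to_g (to_c T F) = T.
Proof.
move=> TF; apply: pred_ext => -[s G]; split.
- by case=> -[G' TsG'] /= ->; rewrite -(TF _ TsG').
- by move=> TsG; split; [exists G | exact: TF _ TsG].
Qed.

Lemma satc_satg_to_g (phi : form Ran) (T : causal_team) :
  satc T phi <-> satg (to_g T) phi.
Proof.
elim: phi T => [X x|Xs Y|a IHa|a IHa b IHb|a IHa b IHb|a IHa b IHb|J a IHa]
  [S F] /=.
- split=> [H [s G] [Ss _] | H s Ss]; [exact: H | exact: H (s, F) _].
- split=> [H [s G] [s' G'] [Ss _] [Ss' _] | H s s' Ss Ss'];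
    [exact: H | exact: H (s, F) (s', F) _ _].
- split=> [H [s G] [Ss /= ->] | H s Ss].
  + by rewrite -to_g_singleton -IHa; apply: H.
  + by rewrite IHa to_g_singleton; apply: H (s, F) _.
- by rewrite IHa IHb.
- split=> [[S1 [S2 [cover [sat1 sat2]]]] | [G1 [G2 [cover [sat1 sat2]]]]].
  + exists (to_g (CTeam S1 F)), (to_g (CTeam S2 F)).
    split; last by rewrite -IHa -IHb.
    by move=> [s G]; rewrite /to_g /= cover; tauto.
  + have G1F p : G1 p -> p.2 = F by move=> G1p; case: (cover p).2; first by left.
    have G2F p : G2 p -> p.2 = F by move=> G2p; case: (cover p).2; first by right.
    exists (ct_set (to_c G1 F)), (ct_set (to_c G2 F)).
    split; last by rewrite IHa IHb !to_gK.
    move=> s /=; split=> [Ss | [] [G GisG]].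
    * by case/(cover (s, F)): (conj Ss (erefl F)) => ?; [left | right]; exists F.
    * by case: (cover (s, G)).2; first by left.
    * by case: (cover (s, G)).2; first by right.
- by rewrite IHa IHb.
- by rewrite IHa to_g_int.
Qed.

End CausalToGeneralized.

Theorem lemma2p16 (V : finType) (Ran : V -> finType)
  (HV : 0 < #|V|) (HR : forall v : V, 0 < #|Ran v|)
  (phi : form Ran) (Hphi : isCOsq phi \/ isCOD phi) :
  (forall T : causal_team Ran, is_causal_team T ->
     (satc T phi <-> satg (to_g T) phi)) /\
  (forall (T : gteam Ran) (F : system Ran), is_gteam T ->
     (forall p, T p -> p.2 = F) ->
     (satg T phi <-> satc (to_c T F) phi)).
Proof.
split=> [T _ | T F _ TF]; first exact: satc_satg_to_g.
by rewrite satc_satg_to_g to_gK.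
Qed.
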